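(* Let $G=(V,E)$ be a finite undirected graph with $|E|>0$, and let $\mathcal{A}_G$ be the DPA defined below. Then $\mathcal{A}_G$ has informative right-congruence.
   Context: $\Sigma:=V\cup\{x_v\mid v\in V\}$ (with fresh letters $x_v$). $\mathcal{A}_G=(\Sigma,V\cup\{q_G\},\delta_G,q_G,c_G)$ has state set $V\cup\{q_G\}$, initial state $q_G$, and for all $u,v\in V$ with $u\neq v$: $\delta_G(q_G,u)=u$, $\delta_G(q_G,x_u)=q_G$, $\delta_G(u,u)=u$, $\delta_G(u,x_u)=u$, $\delta_G(u,v)=q_G$, $\delta_G(u,x_v)=q_G$; priorities $c_G(q_G)=1$ and $c_G(u)=0$ for $u\in V$. A DPA accepts $\alpha\in\Sigma^\omega$ iff the maximal priority among states visited infinitely often in its run is even. For $L\subseteq\Sigma^\omega$, $u\sim_L v$ iff for all $\alpha\in\Sigma^\omega$: $u\alpha\in L\iff v\alpha\in L$. An automaton accepting $L$ has informative right-congruence if its transition system is isomorphic to the transition system induced by $\sim_L$ (states the classes $[u]$, initial $[\epsilon]$, transitions $[u]\xrightarrow{\sigma}[u\sigma]$). *)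

From mathcomp Require Import all_boot.
Set Implicit Arguments. Unset Strict Implicit. Unset Printing Implicit Defensive.

Record DPA (Sigma : finType) := MkDPA {
  dpa_state : finType;
  dpa_delta : dpa_state -> Sigma -> dpa_state;
  dpa_init  : dpa_state;
  dpa_prio  : dpa_state -> nat }.
Arguments dpa_state {Sigma} d.
Arguments dpa_delta {Sigma} d _ _.
Arguments dpa_init {Sigma} d.
Arguments dpa_prio {Sigma} d _.

Definition oword (Sigma : Type) := nat -> Sigma.

Fixpoint run (Sigma : finType) (A : DPA Sigma) (alpha : oword Sigma) (n : nat)
  : dpa_state A :=
  match n with
  | 0 => dpa_init A
  | n'.+1 => dpa_delta A (run A alpha n') (alpha n')
  end.

Definition visited_inf (Sigma : finType) (A : DPA Sigma) (alpha : oword Sigma)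
  (q : dpa_state A) : Prop :=
  forall N, exists n, N <= n /\ @run Sigma A alpha n = q.

Definition dpa_accepts (Sigma : finType) (A : DPA Sigma) (alpha : oword Sigma) : Prop :=
  exists p : nat,
    ~~ odd p /\
    (exists q, @visited_inf Sigma A alpha q /\ dpa_prio A q = p) /\
    (forall q, @visited_inf Sigma A alpha q -> dpa_prio A q <= p).

Definition lang (Sigma : finType) (A : DPA Sigma) : oword Sigma -> Prop :=
  dpa_accepts A.

Definition prepend (Sigma : Type) (u : seq Sigma) (alpha : oword Sigma) : oword Sigma :=
  fun n => if n < size u then nth (alpha 0) u n else alpha (n - size u).

Definition rcong (Sigma : Type) (L : oword Sigma -> Prop) (u v : seq Sigma) : Prop :=
  forall alpha : oword Sigma, L (prepend u alpha) <-> L (prepend v alpha).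

Definition rclass (Sigma : Type) (L : oword Sigma -> Prop) (u : seq Sigma)
  : seq Sigma -> Prop := fun w => rcong L w u.

Definition is_rclass (Sigma : Type) (L : oword Sigma -> Prop) (C : seq Sigma -> Prop) : Prop :=
  exists u, C = rclass L u.

Definition rc_trans (Sigma : Type) (L : oword Sigma -> Prop)
  (C : seq Sigma -> Prop) (s : Sigma) (D : seq Sigma -> Prop) : Prop :=
  exists u, C = rclass L u /\ D = rclass L (rcons u s).

(* The transition system of A is isomorphic to the one induced by ~_{L(A)}:
   a bijection phi from the states of A onto the classes, mapping the initial
   state to [eps] and such that the (unique) sigma-successor of phi q in the
   induced system is phi (delta q sigma). *)
Definition informative_rc (Sigma : finType) (A : DPA Sigma) : Prop :=
  let L := lang A in
  exists phi : dpa_state A -> (seq Sigma -> Prop),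
    [/\ (forall q, is_rclass L (phi q)),
        injective phi,
        (forall C, is_rclass L C -> exists q, phi q = C),
        phi (dpa_init A) = rclass L [::] &
        (forall q s D, rc_trans L (phi q) s D <-> D = phi (dpa_delta A q s))].

(* Alphabet Sigma = V u {x_v | v in V}: inl v is the letter v, inr v is x_v.
   States V u {q_G}: Some v is v, None is q_G. *)
Definition AG_delta (V : finType) (q : option V) (a : V + V) : option V :=
  match q, a with
  | None, inl u => Some u
  | None, inr _ => None
  | Some u, inl v => if v == u then Some u else None
  | Some u, inr v => if v == u then Some u else None
  end.

Definition AG_prio (V : finType) (q : option V) : nat :=
  match q with None => 1 | Some _ => 0 end.

Definition AG (V : finType) : DPA (V + V)%type :=
  @MkDPA (V + V)%type (option V) (@AG_delta V) None (@AG_prio V).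

Definition undirected_graph (V : finType) (e : rel V) : Prop :=
  symmetric e /\ irreflexive e.

(* If every state of a DPA is reachable and no two states accept the same
   residual language, then u ~_L v holds exactly when the runs on u and v end
   in the same state, so the states of the automaton are in bijection with the
   classes of ~_L, compatibly with the transitions.  A_G has this property:
   q_G is reached by the empty word and v by the letter v, while the word
   x_u x_u x_u ... is accepted from state u and rejected from every other
   state. *)
From Stdlib Require Import FunctionalExtensionality PropExtensionality.
From mathcomp Require Import all_boot.

Set Implicit Arguments.
Unset Strict Implicit.
Unset Printing Implicit Defensive.

Lemma inf_often_shift {T : Type} (f : nat -> T) (m : nat) (x : T) :
  (forall N, exists n, N <= n /\ f n = x) <->
  (forall N, exists n, N <= n /\ f (m + n) = x).
Proof.
split=> inf_x N.
  have [n [le_mN_n fn]] := inf_x (m + N).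
  by exists (n - m); rewrite subnKC ?leq_subRL ?(leq_trans (leq_addr N m)).
by have [n [le_Nn fn]] := inf_x N; exists (m + n); rewrite (leq_trans le_Nn) ?leq_addl.
Qed.

Section EventuallyConstantRuns.
Variables (Sigma : finType) (A : DPA Sigma) (alpha : oword Sigma).

Lemma visited_inf_eventually_const (N : nat) (s : dpa_state A) :
  (forall n, N <= n -> run A alpha n = s) ->
  forall q, visited_inf alpha q <-> q = s.
Proof.
move=> const_s q; split=> [inf_q | ->].
  by have [n [le_Nn <-]] := inf_q N; exact: const_s.
by move=> M; exists (maxn N M); rewrite leq_maxr const_s // leq_maxl.
Qed.

Lemma dpa_accepts_eventually_const (N : nat) (s : dpa_state A) :
  (forall n, N <= n -> run A alpha n = s) ->
  dpa_accepts A alpha <-> ~~ odd (dpa_prio A s).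
Proof.
move=> /visited_inf_eventually_const inf_s; split.
  by move=> [p [even_p [[q [/inf_s -> ->]] _]]].
move=> even_s; exists (dpa_prio A s); split=> //; split.
  by exists s; rewrite inf_s.
by move=> q /inf_s ->.
Qed.

End EventuallyConstantRuns.

Section ReachableReduced.
Variables (Sigma : finType) (A : DPA Sigma).

Definition dpa_at (q : dpa_state A) : DPA Sigma :=
  @MkDPA Sigma (dpa_state A) (dpa_delta A) q (dpa_prio A).

Definition reach (u : seq Sigma) : dpa_state A :=
  foldl (dpa_delta A) (dpa_init A) u.

Definition reach_class (q : dpa_state A) : seq Sigma -> Prop :=
  fun w => reach w = q.

Definition state_equiv (q q' : dpa_state A) : Prop :=
  forall alpha, dpa_accepts (dpa_at q) alpha <-> dpa_accepts (dpa_at q') alpha.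

Definition reachable : Prop := forall q, exists u, reach u = q.

Definition reduced : Prop := forall q q', state_equiv q q' -> q = q'.

Lemma reach_rcons u s : reach (rcons u s) = dpa_delta A (reach u) s.
Proof. by rewrite /reach foldl_rcons. Qed.

Lemma run_prepend_take u alpha n :
  n <= size u -> run A (prepend u alpha) n = reach (take n u).
Proof.
elim: n => [|n IHn] lt_nu; first by rewrite take0.
rewrite /= IHn ?(ltnW lt_nu) // (take_nth (alpha 0) lt_nu) reach_rcons.
by rewrite /prepend lt_nu.
Qed.

Lemma run_prepend u alpha n :
  run A (prepend u alpha) (size u + n) = run (dpa_at (reach u)) alpha n.
Proof.
elim: n => [|n IHn]; first by rewrite addn0 run_prepend_take // take_size.
by rewrite addnS /= IHn /prepend ltnNge leq_addr addKn.
Qed.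

Lemma visited_inf_prepend u alpha (q : dpa_state A) :
  @visited_inf Sigma A (prepend u alpha) q <->
  @visited_inf Sigma (dpa_at (reach u)) alpha q.
Proof.
apply: iff_trans (inf_often_shift _ (size u) q) _.
by split=> inf_q N; have [n [le_Nn run_n]] := inf_q N;
  exists n; rewrite ?run_prepend in run_n *.
Qed.

Lemma dpa_accepts_prepend u alpha :
  dpa_accepts A (prepend u alpha) <-> dpa_accepts (dpa_at (reach u)) alpha.
Proof.
split=> -[p [even_p [[q [inf_q prio_q]] max_p]]]; exists p; split=> //.
  split=> [|q' /visited_inf_prepend]; last exact: max_p.
  by exists q; rewrite -visited_inf_prepend.
split=> [|q' /visited_inf_prepend]; last exact: max_p.
by exists q; rewrite visited_inf_prepend.
Qed.

Lemma rcong_reach u w :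
  rcong (lang A) u w <-> state_equiv (reach u) (reach w).
Proof.
by split=> equiv alpha; have := equiv alpha; rewrite /lang !dpa_accepts_prepend.
Qed.

Hypotheses (A_reachable : reachable) (A_reduced : reduced).

Lemma rclass_reach u : rclass (lang A) u = reach_class (reach u).
Proof.
apply: functional_extensionality => w; apply: propositional_extensionality.
by rewrite /rclass rcong_reach; split=> [/A_reduced | ->].
Qed.

Lemma reach_class_inj : injective reach_class.
Proof.
move=> q q' eq_class; have [u reach_u] := A_reachable q.
by have : reach_class q u by []; rewrite eq_class /reach_class reach_u.
Qed.

Theorem informative_rc_reachable_reduced : informative_rc A.
Proof.
exists reach_class; split.
- by move=> q; have [u <-] := A_reachable q; exists u; rewrite rclass_reach.
- exact: reach_class_inj.
- by move=> _ [u ->]; exists (reach u); rewrite rclass_reach.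
- by rewrite rclass_reach.
move=> q s D; split=> [[u [class_u ->]] | ->].
  rewrite rclass_reach in class_u.
  by rewrite rclass_reach reach_rcons (reach_class_inj class_u).
have [u reach_u] := A_reachable q.
by exists u; rewrite !rclass_reach reach_rcons reach_u.
Qed.

End ReachableReduced.

Arguments dpa_at {Sigma} A q.
Arguments state_equiv {Sigma} A q q'.

Section AutomatonAG.
Variable V : finType.

Lemma AG_reachable : reachable (AG V).
Proof. by case=> [v|]; [exists [:: inl v] | exists [::]]. Qed.

Lemma AG_run_repeat_x (q : option V) (u : V) n :
  run (dpa_at (AG V) q) (fun=> inr u) n.+1 = if q == Some u then q else None.
Proof.
elim: n => [|n /= ->]; case: q => [v|] //=; rewrite (inj_eq (@Some_inj _)).
  by rewrite eq_sym; case: ifP.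
by case: eqVneq => [->|] /=; rewrite ?eqxx.
Qed.

Lemma AG_accepts_repeat_x (q : option V) (u : V) :
  dpa_accepts (dpa_at (AG V) q) (fun=> inr u) <-> q = Some u.
Proof.
have run_const n : 1 <= n ->
    run (dpa_at (AG V) q) (fun=> inr u) n = if q == Some u then q else None.
  by case: n => // n _; exact: AG_run_repeat_x.
rewrite (dpa_accepts_eventually_const run_const).
by case: eqVneq => [-> | /eqP ne_qu] /=; split.
Qed.

Lemma AG_reduced : reduced (AG V).
Proof.
have from_equiv q q' v : state_equiv (AG V) q q' -> q' = Some v -> q = Some v.
  by move=> equiv q'_v; apply/AG_accepts_repeat_x/equiv/AG_accepts_repeat_x.
case=> [v|] [v'|] // equiv.
- exact: from_equiv equiv (erefl _).
- by have := from_equiv _ _ v (fun alpha => iff_sym (equiv alpha)) (erefl _).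
- by have := from_equiv _ _ v' equiv (erefl _).
Qed.

End AutomatonAG.

(* A_G does not depend on the edges of G. *)
Theorem lemma3 (V : finType) (e : rel V) :
  undirected_graph e ->
  (exists u v : V, e u v) ->
  informative_rc (AG V).
Proof.
move=> _ _; exact: informative_rc_reachable_reduced (@AG_reachable V) (@AG_reduced V).
Qed.
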